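(* Let $A,C\in\mathbb{C}^{n\times n}$ be Hermitian positive semidefinite, and let $L,M$ be any complex matrices with $n$ rows such that $A=LL^*$ and $C=MM^*$. Then $I+AC$ is invertible and \[ \|(I+AC)^{-1}\|\le 1+\frac{\min\{\|A\|^{1/2}\|L^*C\|,\ \|C\|^{1/2}\|AM\|\}}{1+\min\sigma(AC)}. \]
   Context: $\|\cdot\|$ is the spectral (operator) norm, $\sigma(\cdot)$ the spectrum. For $A,C$ Hermitian positive semidefinite it is known that $\sigma(AC)=\sigma(CA)\subseteq[0,\infty)$, so $\min\sigma(AC)\ge 0$ is well defined. *)

From HB Require Import structures.
From mathcomp Require Import all_boot all_order all_algebra.
From mathcomp Require Import complex.
From mathcomp Require Import boolp classical_sets reals.
Set Implicit Arguments. Unset Strict Implicit. Unset Printing Implicit Defensive.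
Import Order.TTheory GRing.Theory Num.Theory.
Local Open Scope ring_scope.
Local Open Scope classical_set_scope.

Definition ctmx (R : realType) (p q : nat) (A : 'M[R[i]]_(p, q)) : 'M[R[i]]_(q, p) :=
  (map_mx (@conjc R) A)^T.

Definition hpsd (R : realType) (n : nat) (A : 'M[R[i]]_n) : Prop :=
  A = ctmx A /\ forall x : 'cV[R[i]]_n, 0 <= (ctmx x *m A *m x) 0 0.

Definition vnorm (R : realType) (q : nat) (x : 'cV[R[i]]_q) : R :=
  Num.sqrt (\sum_(j < q) (@complex.Re R (x j 0) ^+ 2 + @complex.Im R (x j 0) ^+ 2)).

Definition opnorm (R : realType) (p q : nat) (A : 'M[R[i]]_(p, q)) : R :=
  sup [set vnorm (A *m x) | x in [set x : 'cV[R[i]]_q | vnorm x <= 1]].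

(* Write B = (I + AC)^-1, take a unit vector x and put w = B x, y = L^* C w, so that
   w = x - L y and y + K y = L^* C x with K = L^* C L Hermitian.  Since y lies in the
   range of L^* and L maps the eigenvectors of K outside ker L to eigenvectors of
   AC = L L^* C with the same eigenvalue, the spectral theorem gives
   <K y, y> >= mu |y|^2.  Hence (1 + mu) |y|^2 <= |L^* C x| |y|, and
   |w| <= 1 + ||L|| |y| with ||L|| <= ||A||^(1/2).  The second bound is the first one
   for (I + CA)^-1 = B^*, which has the same norm; CA and AC have the same
   eigenvalues.  Invertibility holds because the eigenvalues of L L^* M M^* are
   nonnegative. *)

From HB Require Import structures.
From mathcomp Require Import all_boot all_order all_algebra.
From mathcomp Require Import complex sesquilinear spectral.
From mathcomp Require Import boolp classical_sets reals.
From mathcomp Require Import ring lra.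
Import Order.TTheory GRing.Theory Num.Theory.
Local Open Scope ring_scope.
Local Open Scope complex_scope.
Set Implicit Arguments. Unset Strict Implicit. Unset Printing Implicit Defensive.

Section FieldEigenvalues.
Variable F : fieldType.

Lemma unitmx_1D n (X : 'M[F]_n) : (1%:M + X \in unitmx) = ~~ eigenvalue X (-1).
Proof.
by rewrite /eigenvalue /eigenspace negbK kermx_eq0 row_free_unit raddfN opprK addrC.
Qed.

Lemma eigenvalue_trmx n (X : 'M[F]_n) a : eigenvalue X^T a = eigenvalue X a.
Proof.
rewrite !eigenvalue_root_char /char_poly /char_poly_mx -map_trmx.
by rewrite -[X in X - _]tr_scalar_mx -linearB det_tr.
Qed.

Lemma eigenvalue_colP n (X : 'M[F]_n) a :
  reflect (exists2 v : 'cV_n, X *m v = a *: v & v != 0) (eigenvalue X a).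
Proof.
rewrite -eigenvalue_trmx; apply: (iffP eigenvalueP) => -[v Xv v0]; exists v^T;
  rewrite ?trmx_eq0 //.
- by rewrite -[X]trmxK -trmx_mul Xv linearZ.
- by rewrite -trmx_mul Xv linearZ.
Qed.

Lemma eigenvalue_mulC n (X Y : 'M[F]_n) a :
  eigenvalue (X *m Y) a -> eigenvalue (Y *m X) a.
Proof.
case/eigenvalueP => v vXY v0; apply/eigenvalueP.
have [vX0|vXn0] := eqVneq (v *m X) 0; last first.
  by exists (v *m X); rewrite // mulmxA -[v *m X *m Y]mulmxA vXY scalemxAl.
have -> : a = 0.
  by apply/eqP; move: vXY; rewrite mulmxA vX0 mul0mx => /esym/eqP;
    rewrite scalemx_eq0 (negPf v0) orbF.
have /det0P[w w0 wYX] : \det (Y *m X) == 0.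
  by rewrite det_mulmx mulf_eq0; apply/orP; right; apply/det0P; exists v.
by exists w; rewrite // scale0r.
Qed.

End FieldEigenvalues.

Section ComplexMatrices.
Variable R : realType.
Local Notation C := R[i].
Local Notation "A ^H" := (ctmx A) (at level 2).

Lemma ctmxE p q (X : 'M[C]_(p, q)) : X^H = (X ^t* )%sesqui.
Proof. by rewrite /ctmx map_trmx. Qed.

Lemma ctmxK p q (X : 'M[C]_(p, q)) : X^H^H = X.
Proof. by rewrite !ctmxE trmxCK. Qed.

Lemma ctmxM p q r (X : 'M[C]_(p, q)) (Y : 'M[C]_(q, r)) : (X *m Y)^H = Y^H *m X^H.
Proof. by rewrite /ctmx map_mxM trmx_mul. Qed.

Lemma ctmxD p q (X Y : 'M[C]_(p, q)) : (X + Y)^H = X^H + Y^H.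
Proof. by rewrite /ctmx map_mxD linearD. Qed.

Lemma ctmxZ p q a (X : 'M[C]_(p, q)) : (a *: X)^H = a^* *: X^H.
Proof. by rewrite /ctmx map_mxZ linearZ. Qed.

Lemma ctmx1 p : (1%:M : 'M[C]_p)^H = 1%:M.
Proof. by rewrite /ctmx map_mx1 trmx1. Qed.

Lemma ctmxV p (X : 'M[C]_p) : (invmx X)^H = invmx X^H.
Proof. by rewrite /ctmx map_invmx trmx_inv. Qed.

Lemma gram_adjoint p q (X : 'M[C]_(p, q)) : (X *m X^H)^H = X *m X^H.
Proof. by rewrite ctmxM ctmxK. Qed.

Definition dotcv q (x y : 'cV[C]_q) : C := (y^H *m x) 0 0.

Lemma dotcvE q (x y : 'cV[C]_q) : dotcv x y = dotmx x^T y^T.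
Proof. by rewrite dotmxE /dotcv !mxE; apply: eq_bigr => j _; rewrite !mxE mulrC. Qed.

Lemma dotcv_sum q (x y : 'cV[C]_q) : dotcv x y = \sum_j x j 0 * (y j 0)^*.
Proof. by rewrite /dotcv mxE; apply: eq_bigr => j _; rewrite !mxE mulrC. Qed.

Lemma dotcvMl p q (X : 'M[C]_(p, q)) x y : dotcv (X *m x) y = dotcv x (X^H *m y).
Proof. by rewrite /dotcv ctmxM ctmxK mulmxA. Qed.

Lemma dotcvMr p q (X : 'M[C]_(p, q)) x y : dotcv x (X *m y) = dotcv (X^H *m x) y.
Proof. by rewrite dotcvMl ctmxK. Qed.

Lemma dotcvDl q (x y z : 'cV[C]_q) : dotcv (x + y) z = dotcv x z + dotcv y z.
Proof. by rewrite /dotcv mulmxDr mxE. Qed.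

Lemma dotcvZl q a (x y : 'cV[C]_q) : dotcv (a *: x) y = a * dotcv x y.
Proof. by rewrite /dotcv -scalemxAr mxE. Qed.

Lemma dotcvZr q a (x y : 'cV[C]_q) : dotcv x (a *: y) = a^* * dotcv x y.
Proof. by rewrite /dotcv ctmxZ -scalemxAl mxE. Qed.

Lemma dotcv0r q (x : 'cV[C]_q) : dotcv x 0 = 0.
Proof. by rewrite /dotcv /ctmx map_mx0 trmx0 mul0mx mxE. Qed.

Lemma dotcv_ge0 q (x : 'cV[C]_q) : 0 <= dotcv x x.
Proof. by rewrite dotcvE dnorm_ge0. Qed.

Lemma dotcv_eq0 q (x : 'cV[C]_q) : (dotcv x x == 0) = (x == 0).
Proof. by rewrite dotcvE dnorm_eq0 trmx_eq0. Qed.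

Lemma vnorm_ge0 q (x : 'cV[C]_q) : 0 <= vnorm x.
Proof. exact: sqrtr_ge0. Qed.

Lemma vnorm_sqrC q (x : 'cV[C]_q) : (vnorm x ^+ 2)%:C = dotcv x x.
Proof.
rewrite sqr_sqrtr; last by apply: sumr_ge0 => j _; rewrite addr_ge0 ?sqr_ge0.
rewrite dotcv_sum rmorph_sum; apply: eq_bigr => j _.
exact: etrans (add_Re2_Im2 _) (sqr_normc _).
Qed.

Lemma vnormC q (x : 'cV[C]_q) : (vnorm x)%:C = sqrtC (dotcv x x).
Proof. by rewrite -vnorm_sqrC rmorphXn sqrCK // ler0c vnorm_ge0. Qed.

Lemma vnorm_le q (x : 'cV[C]_q) r :
  0 <= r -> dotcv x x <= (r ^+ 2)%:C -> vnorm x <= r.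
Proof. by move=> r0; rewrite -vnorm_sqrC lecR ler_sqr ?nnegrE ?vnorm_ge0. Qed.

Lemma vnorm_eq0 q (x : 'cV[C]_q) : (vnorm x == 0) = (x == 0).
Proof. by rewrite -dotcv_eq0 -vnorm_sqrC fmorph_eq0 sqrf_eq0. Qed.

Lemma vnorm0 q : vnorm (0 : 'cV[C]_q) = 0.
Proof. by apply/eqP; rewrite vnorm_eq0. Qed.

Lemma vnorm_eq q (x : 'cV[C]_q) r :
  0 <= r -> dotcv x x = (r ^+ 2)%:C -> vnorm x = r.
Proof.
move=> r0; rewrite -vnorm_sqrC => /(@complexI R)/eqP.
by rewrite eqrXn2 ?vnorm_ge0 // => /eqP.
Qed.

Lemma vnormZ q t (x : 'cV[C]_q) : vnorm (t%:C *: x) = `|t| * vnorm x.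
Proof.
apply: vnorm_eq; first by rewrite mulr_ge0 ?vnorm_ge0.
rewrite dotcvZl dotcvZr -vnorm_sqrC exprMn real_normK ?num_real //.
by apply/eqP; rewrite eq_complex /=; apply/andP; split; apply/eqP; ring.
Qed.

Lemma vnormN q (x : 'cV[C]_q) : vnorm (- x) = vnorm x.
Proof.
apply: vnorm_eq; first exact: vnorm_ge0.
by rewrite vnorm_sqrC !dotcvE linearN /= linearNl linearN opprK.
Qed.

Lemma vnormD q (x y : 'cV[C]_q) : vnorm (x + y) <= vnorm x + vnorm y.
Proof.
have := (triangle_lerif (@dotmx _ _) x^T y^T).1.
have -> : x^T + y^T = (x + y)^T by rewrite linearD.
by rewrite /= -!dotcvE -!vnormC -rmorphD lecR.
Qed.

Lemma norm_dotcv_le q (x y : 'cV[C]_q) : `|dotcv x y| <= (vnorm x * vnorm y)%:C.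
Proof.
have := (CauchySchwarz_sqrt (@dotmx _ _) x^T y^T).1.
by rewrite /= -!dotcvE -!vnormC -rmorphM.
Qed.

Lemma vnorm_adjoint_sqr_le p q (X : 'M[C]_(p, q)) x :
  vnorm (X *m x) ^+ 2 <= vnorm x * vnorm (X^H *m (X *m x)).
Proof.
have := dotcv_ge0 (X *m x); rewrite -lecR vnorm_sqrC dotcvMl => Xx0.
by rewrite -(ger0_norm Xx0); exact: norm_dotcv_le.
Qed.

Lemma mulmx_row_dotcv p q (X : 'M[C]_(p, q)) x i :
  (X *m x) i 0 = dotcv x (row i X)^H.
Proof. by rewrite /dotcv ctmxK !mxE; apply: eq_bigr => j _; rewrite !mxE. Qed.

Lemma vnorm_mulmx_bounded p q (X : 'M[C]_(p, q)) :
  exists2 K, 0 <= K & forall x, vnorm (X *m x) <= K * vnorm x.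
Proof.
have S0 : 0 <= \sum_i vnorm (row i X)^H ^+ 2.
  by rewrite sumr_ge0 // => i _; rewrite sqr_ge0.
exists (Num.sqrt (\sum_i vnorm (row i X)^H ^+ 2)) => [|x]; first exact: sqrtr_ge0.
apply: vnorm_le; first by rewrite mulr_ge0 ?sqrtr_ge0 ?vnorm_ge0.
apply: (@le_trans _ _ (\sum_i ((vnorm x * vnorm (row i X)^H) ^+ 2)%:C)).
  rewrite dotcv_sum; apply: ler_sum => i _.
  rewrite -sqr_normc mulmx_row_dotcv rmorphXn.
  rewrite ler_sqr ?nnegrE ?normr_ge0 ?norm_dotcv_le //.
  by rewrite ler0c mulr_ge0 ?vnorm_ge0.
rewrite -rmorph_sum lecR exprMn (sqr_sqrtr S0) mulr_suml.
by apply: ler_sum => i _; rewrite exprMn mulrC.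
Qed.

Lemma opnorm_has_sup p q (X : 'M[C]_(p, q)) :
  has_sup [set vnorm (X *m x) | x in [set x : 'cV[C]_q | vnorm x <= 1]].
Proof.
split; first by exists 0, 0; rewrite /= ?mulmx0 vnorm0 ?ler01.
have [K K0 XK] := vnorm_mulmx_bounded X.
by exists K => _ [x /= x1 <-]; apply: le_trans (XK x) _; rewrite ler_piMr.
Qed.

Lemma opnorm_ub p q (X : 'M[C]_(p, q)) x :
  vnorm x <= 1 -> vnorm (X *m x) <= opnorm X.
Proof. by move=> x1; apply: sup_upper_bound (opnorm_has_sup X) _ _; exists x. Qed.

Lemma opnorm_ge0 p q (X : 'M[C]_(p, q)) : 0 <= opnorm X.
Proof. by have := @opnorm_ub _ _ X 0; rewrite mulmx0 !vnorm0 ler01; apply. Qed.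

Lemma opnorm_le p q (X : 'M[C]_(p, q)) b :
  (forall x, vnorm x <= 1 -> vnorm (X *m x) <= b) -> opnorm X <= b.
Proof.
move=> Xb; apply: ge_sup; first by case: (opnorm_has_sup X).
by move=> _ [x /= x1 <-]; apply: Xb.
Qed.

Lemma opnormP p q (X : 'M[C]_(p, q)) x : vnorm (X *m x) <= opnorm X * vnorm x.
Proof.
have [/eqP|x0] := eqVneq (vnorm x) 0.
  by rewrite vnorm_eq0 => /eqP->; rewrite mulmx0 !vnorm0 mulr0.
have xp : 0 < vnorm x by rewrite lt_def x0 vnorm_ge0.
have := @opnorm_ub _ _ X ((vnorm x)^-1%:C *: x).
rewrite -scalemxAr !vnormZ gtr0_norm ?invr_gt0 // mulVf // lexx => /(_ isT).
by rewrite -(ler_pM2r xp) mulrAC mulVf // mul1r.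
Qed.

Lemma opnorm_adjoint_le p q (X : 'M[C]_(p, q)) : opnorm X <= opnorm X^H.
Proof.
apply: opnorm_le => x x1.
have v0 := vnorm_ge0 (X *m x); have c0 := opnorm_ge0 X^H.
have : vnorm (X *m x) ^+ 2 <= opnorm X^H * vnorm (X *m x).
  apply: le_trans (vnorm_adjoint_sqr_le X x) _.
  apply: le_trans (ler_wpM2l (vnorm_ge0 x) (opnormP X^H (X *m x))) _.
  by rewrite ler_piMl ?mulr_ge0.
by move: v0 c0; set v := vnorm _; set c := opnorm _ => v0 c0 h; nra.
Qed.

Lemma opnorm_adjoint p q (X : 'M[C]_(p, q)) : opnorm X^H = opnorm X.
Proof.
by apply/eqP; rewrite eq_le opnorm_adjoint_le -{2}(ctmxK X) opnorm_adjoint_le.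
Qed.

Lemma vnorm_adjoint_gram_le p q (L : 'M[C]_(p, q)) x :
  vnorm (L^H *m x) <= Num.sqrt (opnorm (L *m L^H)) * vnorm x.
Proof.
rewrite -ler_sqr ?nnegrE ?mulr_ge0 ?sqrtr_ge0 ?vnorm_ge0 //.
rewrite exprMn (sqr_sqrtr (opnorm_ge0 _)).
apply: le_trans (vnorm_adjoint_sqr_le L^H x) _; rewrite ctmxK mulmxA expr2 mulrA.
by rewrite mulrC ler_wpM2r ?vnorm_ge0 ?opnormP.
Qed.

Lemma opnorm_le_sqrt_gram p q (L : 'M[C]_(p, q)) :
  opnorm L <= Num.sqrt (opnorm (L *m L^H)).
Proof.
rewrite -opnorm_adjoint; apply: opnorm_le => x x1.
by apply: le_trans (vnorm_adjoint_gram_le L x) _; rewrite ler_piMr ?sqrtr_ge0.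
Qed.

(* In an orthonormal eigenbasis of [K] only the eigenvectors not orthogonal to [y]
   contribute to either side. *)
Lemma rayleigh_lower_bound q (K : 'M[C]_q) (mu : C) (y : 'cV[C]_q) :
  K^H = K ->
  (forall (u : 'cV[C]_q) lam, K *m u = lam *: u -> dotcv y u != 0 -> mu <= lam) ->
  mu * dotcv y y <= dotcv (K *m y) y.
Proof.
move=> KH Kmu.
have Kherm : K \is hermsymmx by rewrite is_hermitianmxE expr0 scale1r -ctmxE KH.
have /orthomx_spectralP := hermitian_normalmx Kherm.
have /mxOverP d_real := hermitian_spectral_diag_real Kherm.
set P := spectralmx K; set d := spectral_diag K => KE.
have PPH : P *m P^H = 1%:M by rewrite ctmxE; apply/unitarymxP/spectral_unitarymx.
rewrite invmx_unitary ?spectral_unitarymx // -ctmxE in KE.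
set z := P *m y.
have -> : dotcv y y = dotcv z z by rewrite dotcvMl mulmxA (mulmx1C PPH) mul1mx.
have -> : dotcv (K *m y) y = dotcv (diag_mx d *m z) z.
  by rewrite KE -!mulmxA dotcvMl ctmxK.
rewrite !dotcv_sum mulr_sumr; apply: ler_sum => j _.
have -> : (diag_mx d *m z) j 0 = d 0 j * z j 0 by rewrite mul_diag_mx mxE.
rewrite -mulrA.
have [->|zj0] := eqVneq (z j 0) 0; first by rewrite mul0r !mulr0.
rewrite ler_wpM2r ?mulcJ_ge0 // (Kmu (row j P)^H) // -?mulmx_row_dotcv //.
rewrite -{1}KH -ctmxM KE !mulmxA -row_mul PPH -row_mul mul1mx row_diag_mx.
by rewrite -scalemxAl -rowE ctmxZ conj_Creal.
Qed.

(* An eigenvector [u] of [L^* G L] with [L u != 0] yields the eigenvector [L u] of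
   [L L^* G]; those with [L u = 0] are orthogonal to the range of [L^*]. *)
Lemma rayleigh_gram_range n k (L : 'M[C]_(n, k)) (G : 'M[C]_n) (mu : C) w :
  G^H = G -> (forall a, eigenvalue (L *m L^H *m G) a -> mu <= a) ->
  mu * dotcv (L^H *m w) (L^H *m w) <=
    dotcv (L^H *m G *m L *m (L^H *m w)) (L^H *m w).
Proof.
move=> GH eig_mu; apply: rayleigh_lower_bound => [|u lam Ku].
  by rewrite !ctmxM ctmxK GH mulmxA.
rewrite dotcvMl ctmxK => Lu0; apply: eig_mu; apply/eigenvalue_colP.
exists (L *m u); last by apply: contra Lu0 => /eqP->; rewrite dotcv0r.
by rewrite scalemxAr -Ku !mulmxA.
Qed.

Lemma eigenvalue_gram_mul_ge0 n k l (L : 'M[C]_(n, k)) (M : 'M[C]_(n, l)) a :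
  eigenvalue (L *m L^H *m (M *m M^H)) a -> 0 <= a.
Proof.
case/eigenvalue_colP => v ev v0.
have key : a * dotcv (M^H *m v) (M^H *m v) =
    dotcv (L^H *m (M *m (M^H *m v))) (L^H *m (M *m (M^H *m v))).
  by rewrite -dotcvMr -dotcvZl -ev -!mulmxA (dotcvMl L).
have [Mv0|Mvn0] := eqVneq (M^H *m v) 0.
  have /eqP : a *: v = 0 by rewrite -ev -!mulmxA Mv0 !mulmx0.
  by rewrite scalemx_eq0 (negPf v0) orbF => /eqP->.
have Mv_gt0 : 0 < dotcv (M^H *m v) (M^H *m v).
  by rewrite lt_def dotcv_eq0 Mvn0 dotcv_ge0.
by rewrite -(pmulr_lge0 _ Mv_gt0) key dotcv_ge0.
Qed.

Lemma vnorm_le_coercive q (K : 'M[C]_q) (mu : R) (y b : 'cV[C]_q) :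
  0 < 1 + mu -> mu%:C * dotcv y y <= dotcv (K *m y) y -> y + K *m y = b ->
  vnorm y <= vnorm b / (1 + mu).
Proof.
move=> mu1 Kmu yb.
have h : (1 + mu)%:C * dotcv y y <= dotcv b y.
  by rewrite -yb dotcvDl rmorphD rmorph1 mulrDl mul1r lerD2l.
have b0 : 0 <= dotcv b y.
  by apply: le_trans h; rewrite mulr_ge0 ?ler0c ?dotcv_ge0 ?ltW.
have := le_trans h (le_trans (real_ler_norm (ger0_real b0)) (norm_dotcv_le b y)).
rewrite -vnorm_sqrC -rmorphM lecR ler_pdivlMr // => hy.
by have := vnorm_ge0 y; have := vnorm_ge0 b; nra.
Qed.

Lemma opnorm_invmx_1D_gram_le n k (L : 'M[C]_(n, k)) (G : 'M[C]_n) (mu : R) :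
  G^H = G -> 0 < 1 + mu ->
  (forall a, eigenvalue (L *m L^H *m G) a -> mu%:C <= a) ->
  opnorm (invmx (1%:M + L *m L^H *m G)) <=
    1 + Num.sqrt (opnorm (L *m L^H)) * opnorm (L^H *m G) / (1 + mu).
Proof.
move=> GH mu1 eig_mu.
have unitB : 1%:M + L *m L^H *m G \in unitmx.
  by rewrite unitmx_1D; apply/negP => /eig_mu; rewrite lecE /= => /andP[_]; lra.
apply: opnorm_le => x x1.
have : (1%:M + L *m L^H *m G) *m (invmx (1%:M + L *m L^H *m G) *m x) = x.
  by rewrite mulmxA mulmxV // mul1mx.
move: (invmx _ *m x) => w; rewrite mulmxDl mul1mx -!mulmxA => wx.
set y := L^H *m (G *m w).
have yb : y + L^H *m G *m L *m y = L^H *m G *m x.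
  by rewrite -wx mulmxDr /y !mulmxA.
have hy : vnorm y <= opnorm (L^H *m G) / (1 + mu).
  apply: le_trans (vnorm_le_coercive mu1 (rayleigh_gram_range _ GH eig_mu) yb) _.
  rewrite ler_pM2r ?invr_gt0 //; apply: le_trans (opnormP _ _) _.
  by rewrite ler_piMr ?opnorm_ge0.
rewrite -[w](addrK (L *m y)) wx; apply: le_trans (vnormD _ _) _; rewrite vnormN.
apply: lerD => //; apply: le_trans (opnormP L y) _; rewrite -mulrA.
by apply: ler_pM; rewrite ?opnorm_ge0 ?vnorm_ge0 ?opnorm_le_sqrt_gram.
Qed.

End ComplexMatrices.

Theorem theorem3p1 (R : realType) (n k l : nat)
    (A C : 'M[R[i]]_n) (L : 'M[R[i]]_(n, k)) (M : 'M[R[i]]_(n, l)) :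
  hpsd A -> hpsd C -> A = L *m ctmx L -> C = M *m ctmx M ->
  (1%:M + A *m C \in unitmx) /\
  (forall mu : R,
     eigenvalue (A *m C) (mu%:C)%C ->
     (forall a : R[i], eigenvalue (A *m C) a -> (mu%:C)%C <= a) ->
     opnorm (invmx (1%:M + A *m C)) <=
       1 + Num.min (Num.sqrt (opnorm A) * opnorm (ctmx L *m C))
                   (Num.sqrt (opnorm C) * opnorm (A *m M)) / (1 + mu)).
Proof.
(* The [hpsd] hypotheses follow from the factorizations. *)
move=> _ _ -> ->; split.
  rewrite unitmx_1D; apply/negP => /eigenvalue_gram_mul_ge0.
  by rewrite oppr_ge0 ler10.
move=> mu mu_eig mu_min.
have mu1 : 0 < 1 + mu.
  by have := eigenvalue_gram_mul_ge0 mu_eig; rewrite ler0c => mu0; lra.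
have boundL := opnorm_invmx_1D_gram_le (gram_adjoint M) mu1 mu_min.
have := opnorm_invmx_1D_gram_le (gram_adjoint L) mu1
  (fun a eig => mu_min a (eigenvalue_mulC eig)).
have -> : invmx (1%:M + M *m ctmx M *m (L *m ctmx L)) =
          ctmx (invmx (1%:M + L *m ctmx L *m (M *m ctmx M))).
  by rewrite ctmxV ctmxD ctmx1 ctmxM !gram_adjoint.
rewrite opnorm_adjoint -[opnorm (ctmx M *m _)]opnorm_adjoint.
rewrite ctmxM ctmxK gram_adjoint.
by move=> boundM; rewrite minElt; case: ifP.
Qed.
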